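(* Let $(Y,G)$ and $(X,G)$ be compact metrizable dynamical systems and $\pi:Y\to X$ a factor map (continuous, surjective, $G$-equivariant) which is finite-to-one and a local homeomorphism (every point of $Y$ has a neighborhood on which $\pi$ restricts to a homeomorphism onto its image). Suppose $X$ is connected and $G$ is a compactly generated locally compact abelian group, i.e. there is a compact neighborhood $K$ of $0$ in $G$ with $G=\bigcup_{n\in\mathbb N}nK$, where $nK=K+\dots+K$ ($n$ summands). If $(X,G)$ is equicontinuous, then $(Y,G)$ is equicontinuous.
   Context: A system $(Z,G)$ with $Z$ a compact metric space and $G$ acting continuously is equicontinuous if the family of homeomorphisms $\{z\mapsto t\cdot z\}_{t\in G}$ is equicontinuous at every point of $Z$. *)

From Stdlib Require Import Reals List.
Open Scope R_scope.

Definition is_metric {X : Type} (d : X -> X -> R) : Prop :=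
  (forall x y, 0 <= d x y) /\
  (forall x y, d x y = 0 <-> x = y) /\
  (forall x y, d x y = d y x) /\
  (forall x y z, d x z <= d x y + d y z).

Definition m_open {X : Type} (d : X -> X -> R) (U : X -> Prop) : Prop :=
  forall x, U x -> exists r, r > 0 /\ forall y, d x y < r -> U y.

(* (sequential) compactness of a metric space; equivalent to compactness *)
Definition m_compact {X : Type} (d : X -> X -> R) : Prop :=
  forall u : nat -> X, exists (phi : nat -> nat) (l : X),
    (forall n, (phi n < phi (S n))%nat) /\
    forall eps, eps > 0 -> exists N, forall n, (n >= N)%nat -> d (u (phi n)) l < eps.

Definition m_connected {X : Type} (d : X -> X -> R) : Prop :=
  forall U : X -> Prop, m_open d U -> m_open d (fun x => ~ U x) ->
    (forall x, U x) \/ (forall x, ~ U x).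

Definition m_continuous {X Y : Type} (dX : X -> X -> R) (dY : Y -> Y -> R)
  (f : X -> Y) : Prop :=
  forall x eps, eps > 0 -> exists delta, delta > 0 /\
    forall x', dX x x' < delta -> dY (f x) (f x') < eps.

Definition is_topology {G : Type} (op : (G -> Prop) -> Prop) : Prop :=
  op (fun _ => True) /\
  (forall U V, op U -> op V -> op (fun x => U x /\ V x)) /\
  (forall (I : Type) (F : I -> G -> Prop), (forall i, op (F i)) ->
     op (fun x => exists i, F i x)) /\
  (forall U V, op U -> (forall x, U x <-> V x) -> op V).

Definition t_hausdorff {G : Type} (op : (G -> Prop) -> Prop) : Prop :=
  forall x y, x <> y -> exists U V, op U /\ op V /\ U x /\ V y /\
    forall z, ~ (U z /\ V z).

Definition t_compact_set {G : Type} (op : (G -> Prop) -> Prop) (K : G -> Prop) : Prop :=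
  forall (I : Type) (F : I -> G -> Prop), (forall i, op (F i)) ->
    (forall x, K x -> exists i, F i x) ->
    exists l : list I, forall x, K x -> exists i, In i l /\ F i x.

Definition t_nbhd {G : Type} (op : (G -> Prop) -> Prop) (K : G -> Prop) (g : G) : Prop :=
  exists U, op U /\ U g /\ forall x, U x -> K x.

Definition is_abelian_group {G : Type} (zero : G) (add : G -> G -> G) (opp : G -> G) : Prop :=
  (forall a b c, add a (add b c) = add (add a b) c) /\
  (forall a b, add a b = add b a) /\
  (forall a, add zero a = a) /\
  (forall a, add (opp a) a = zero).

Definition is_topological_group {G : Type} (op : (G -> Prop) -> Prop)
  (add : G -> G -> G) (opp : G -> G) : Prop :=
  (forall a b W, op W -> W (add a b) ->
     exists U V, op U /\ op V /\ U a /\ V b /\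
       forall x y, U x -> V y -> W (add x y)) /\
  (forall a W, op W -> W (opp a) ->
     exists U, op U /\ U a /\ forall x, U x -> W (opp x)).

Definition is_LCA_group {G : Type} (op : (G -> Prop) -> Prop)
  (zero : G) (add : G -> G -> G) (opp : G -> G) : Prop :=
  is_topology op /\ t_hausdorff op /\ is_abelian_group zero add opp /\
  is_topological_group op add opp /\
  (forall g, exists K, t_compact_set op K /\ t_nbhd op K g).

Fixpoint nsum {G : Type} (zero : G) (add : G -> G -> G) (K : G -> Prop) (n : nat) : G -> Prop :=
  match n with
  | O => fun g => g = zero
  | S m => fun g => exists k h, K k /\ nsum zero add K m h /\ g = add k h
  end.

Definition compactly_generated {G : Type} (op : (G -> Prop) -> Prop)
  (zero : G) (add : G -> G -> G) (opp : G -> G) : Prop :=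
  exists K, t_compact_set op K /\ t_nbhd op K zero /\
    forall g, exists n, nsum zero add K n g.

Definition is_cont_action {G X : Type} (op : (G -> Prop) -> Prop)
  (zero : G) (add : G -> G -> G) (d : X -> X -> R) (act : G -> X -> X) : Prop :=
  (forall x, act zero x = x) /\
  (forall g h x, act (add g h) x = act g (act h x)) /\
  (forall g x eps, eps > 0 -> exists U delta, op U /\ U g /\ delta > 0 /\
     forall g' x', U g' -> d x x' < delta -> d (act g x) (act g' x') < eps).

Definition equicontinuous {G X : Type} (d : X -> X -> R) (act : G -> X -> X) : Prop :=
  forall z eps, eps > 0 -> exists delta, delta > 0 /\
    forall z', d z z' < delta -> forall t, d (act t z) (act t z') < eps.

Definition finite_to_one {Y X : Type} (p : Y -> X) : Prop :=
  forall x, exists l : list Y, forall y, p y = x -> In y l.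

Definition local_homeo {Y X : Type} (dY : Y -> Y -> R) (dX : X -> X -> R)
  (p : Y -> X) : Prop :=
  forall y, exists U, m_open dY U /\ U y /\
    (forall u v, U u -> U v -> p u = p v -> u = v) /\
    (forall u eps, U u -> eps > 0 -> exists delta, delta > 0 /\
       forall v, U v -> dX (p u) (p v) < delta -> dY u v < eps).

From Stdlib Require Import Reals List Lra Lia Classical IndefiniteDescription.
Open Scope R_scope.

(* Compactness of Y turns the local properties of the factor map
   p into uniform ones: there is a radius r > 0 below which p is injective,
   and on pairs closer than r/2, closeness of the images forces closeness of
   the points (a uniform local inverse).  Likewise the joint continuity of
   the action is uniform over a compact set K of group elements.  For a
   compact generating neighbourhood K of 0, an induction on n then shows that
   every t in nK keeps the orbits of two nearby points z, z' close: if
   t = k + h with k in K and h in (n-1)K, the points h z, h z' are close, so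
   k h z, k h z' are at distance < r/2, while their images under p are close
   by equicontinuity of X; the uniform local inverse concludes.
   All uniformity statements are proved by contradiction through one generic
   lemma ([uniform_of_sequential]) and sequential compactness. *)

Definition eventually (P : nat -> Prop) : Prop :=
  exists N, forall n, (N <= n)%nat -> P n.

Definition converges {T : Type} (d : T -> T -> R) (u : nat -> T) (l : T) : Prop :=
  forall e, e > 0 -> eventually (fun n => d (u n) l < e).

Definition strictly_increasing (phi : nat -> nat) : Prop :=
  forall n, (phi n < phi (S n))%nat.

Lemma strictly_increasing_ge (phi : nat -> nat) :
  strictly_increasing phi -> forall n, (n <= phi n)%nat.
Proof. intros H n; induction n; [lia | specialize (H n); lia]. Qed.

Lemma eventually_and (P Q : nat -> Prop) :
  eventually P -> eventually Q -> eventually (fun n => P n /\ Q n).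
Proof.
  intros [N1 H1] [N2 H2]; exists (max N1 N2); intros n Hn.
  split; [apply H1 | apply H2]; lia.
Qed.

Lemma eventually_witness (P : nat -> Prop) : eventually P -> exists n, P n.
Proof. intros [N HN]; exists N; apply HN; lia. Qed.

Lemma eventually_subseq (phi : nat -> nat) (P : nat -> Prop) :
  strictly_increasing phi -> eventually P -> eventually (fun n => P (phi n)).
Proof.
  intros Hphi [N HN]; exists N; intros n Hn.
  apply HN; pose proof (strictly_increasing_ge phi Hphi n); lia.
Qed.

Lemma eventually_inv_succ_lt (e : R) :
  e > 0 -> eventually (fun n => / INR (S n) < e).
Proof.
  intros He; destruct (archimed_cor1 e He) as [N [HN HN0]].
  exists N; intros n Hn; eapply Rle_lt_trans; [| exact HN].
  apply Rinv_le_contravar; [apply lt_0_INR; lia | apply le_INR; lia].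
Qed.

Lemma converges_subseq {T : Type} (d : T -> T -> R) (u : nat -> T) (l : T)
  (phi : nat -> nat) :
  strictly_increasing phi -> converges d u l -> converges d (fun n => u (phi n)) l.
Proof. intros Hphi Hu e He; exact (eventually_subseq phi _ Hphi (Hu e He)). Qed.

Lemma uniform_of_sequential {A : Type} (small : A -> R) (good : A -> Prop) :
  (forall w : nat -> A,
     (forall n, small (w n) < / INR (S n) /\ ~ good (w n)) -> False) ->
  exists delta, delta > 0 /\ forall a, small a < delta -> good a.
Proof.
  intros Hseq; apply NNPP; intros Hno.
  assert (Hbad : forall n, exists a, small a < / INR (S n) /\ ~ good a).
  { intros n; apply NNPP; intros Hn; apply Hno; exists (/ INR (S n)); split.
    - apply Rinv_0_lt_compat, lt_0_INR; lia.
    - intros a Ha; apply NNPP; intros Hg; apply Hn; exists a; auto. }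
  apply functional_choice in Hbad as [w Hw]; exact (Hseq w Hw).
Qed.

Section Metric.

Variables (T : Type) (d : T -> T -> R).
Hypothesis Hd : is_metric d.

Lemma dist_sym (x y : T) : d x y = d y x.
Proof. destruct Hd as [_ [_ [Hs _]]]; apply Hs. Qed.

Lemma dist_triangle (x y z : T) : d x z <= d x y + d y z.
Proof. destruct Hd as [_ [_ [_ Ht]]]; apply Ht. Qed.

Lemma eq_of_dist_lt_all (x y : T) : (forall e, e > 0 -> d x y < e) -> x = y.
Proof.
  destruct Hd as [Hpos [Hzero _]]; intros Hsmall.
  destruct (Rle_lt_or_eq_dec _ _ (Hpos x y)) as [Hlt | Heq].
  - specialize (Hsmall _ Hlt); lra.
  - apply Hzero; auto.
Qed.

Lemma limits_coincide (u v : nat -> T) (a b : T) :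
  converges d u a -> converges d v b ->
  (forall e, e > 0 -> eventually (fun n => d (u n) (v n) < e)) -> a = b.
Proof.
  intros Hu Hv Huv; apply eq_of_dist_lt_all; intros e He.
  destruct (eventually_witness _ (eventually_and _ _ (Hu (e/3) ltac:(lra))
    (eventually_and _ _ (Hv (e/3) ltac:(lra)) (Huv (e/3) ltac:(lra)))))
    as [n [H1 [H2 H3]]].
  pose proof (dist_triangle a (u n) b); pose proof (dist_triangle (u n) (v n) b).
  rewrite (dist_sym (u n) a) in H1; lra.
Qed.

End Metric.

Lemma continuous_converges {Y X : Type} (dY : Y -> Y -> R) (dX : X -> X -> R)
  (p : Y -> X) (u : nat -> Y) (a : Y) :
  is_metric dY -> is_metric dX -> m_continuous dY dX p ->
  converges dY u a -> converges dX (fun n => p (u n)) (p a).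
Proof.
  intros HdY HdX Hpc Hu e He.
  destruct (Hpc a e He) as [delta [Hdelta Hcont]].
  destruct (Hu delta Hdelta) as [N HN]; exists N; intros n Hn.
  rewrite (dist_sym _ dX HdX); apply Hcont.
  rewrite (dist_sym _ dY HdY); auto.
Qed.

Lemma compact_uniform_radius {G : Type} (op : (G -> Prop) -> Prop) (K : G -> Prop)
  (P : (G -> Prop) -> R -> Prop) :
  t_compact_set op K ->
  (forall g, K g -> exists U delta, op U /\ U g /\ delta > 0 /\ P U delta) ->
  exists m, m > 0 /\ forall k, K k -> exists U delta, U k /\ m <= delta /\ P U delta.
Proof.
  intros HK Hloc.
  set (I := {q : (G -> Prop) * R | op (fst q) /\ snd q > 0 /\ P (fst q) (snd q)}).
  destruct (HK I (fun i => fst (proj1_sig i))) as [l Hl].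
  - intros i; exact (proj1 (proj2_sig i)).
  - intros g Hg; destruct (Hloc g Hg) as [U [delta [HU [HUg [Hdelta HP]]]]].
    exists (exist _ (U, delta) (conj HU (conj Hdelta HP))); exact HUg.
  - assert (Hmin : exists m, m > 0 /\ forall i, In i l -> m <= snd (proj1_sig i)).
    { clear Hl; induction l as [| i l IH].
      - exists 1; split; [lra | intros i []].
      - destruct IH as [m [Hm Hml]].
        exists (Rmin m (snd (proj1_sig i))); split.
        + apply Rmin_pos; [exact Hm | exact (proj1 (proj2 (proj2_sig i)))].
        + intros j [<- | Hj]; [apply Rmin_r |].
          eapply Rle_trans; [apply Rmin_l | auto]. }
    destruct Hmin as [m [Hm Hml]]; exists m; split; [exact Hm |].
    intros k Hk; destruct (Hl k Hk) as [i [Hin Hik]].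
    exists (fst (proj1_sig i)), (snd (proj1_sig i)).
    split; [exact Hik | split; [exact (Hml i Hin) | exact (proj2 (proj2 (proj2_sig i)))]].
Qed.

Section FactorMap.

Variables (Y X : Type) (dY : Y -> Y -> R) (dX : X -> X -> R) (p : Y -> X).
Hypotheses (HdY : is_metric dY) (HYc : m_compact dY).

Lemma local_injectivity_radius :
  local_homeo dY dX p ->
  exists r, r > 0 /\ forall u v, dY u v < r -> p u = p v -> u = v.
Proof.
  intros Hpl.
  destruct (uniform_of_sequential (fun uv : Y * Y => dY (fst uv) (snd uv))
    (fun uv => p (fst uv) = p (snd uv) -> fst uv = snd uv)) as [r [Hr Hgood]].
  - intros w Hw.
    destruct (HYc (fun n => fst (w n))) as [phi [a [Hphi Hcv]]].
    destruct (Hpl a) as [U [HUo [HUa [HUinj _]]]].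
    destruct (HUo a HUa) as [rho [Hrho Hball]].
    destruct (eventually_witness _ (eventually_and _ _ (Hcv (rho/2) ltac:(lra))
      (eventually_subseq phi _ Hphi (eventually_inv_succ_lt (rho/2) ltac:(lra)))))
      as [n [Hclose Hsmall]].
    destruct (Hw (phi n)) as [Hpair Hbad]; apply Hbad; intros Hp.
    pose proof (dist_triangle _ dY HdY a (fst (w (phi n))) (snd (w (phi n)))).
    rewrite (dist_sym _ dY HdY) in Hclose.
    apply HUinj; [apply Hball; lra | apply Hball; lra | exact Hp].
  - exists r; split; [exact Hr |]; intros u v Huv; exact (Hgood (u, v) Huv).
Qed.

Lemma uniform_local_inverse (r : R) :
  is_metric dX -> m_continuous dY dX p -> r > 0 ->
  (forall u v, dY u v < r -> p u = p v -> u = v) ->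
  forall eps, eps > 0 -> exists rho, rho > 0 /\
    forall u v, dY u v < r/2 -> dX (p u) (p v) < rho -> dY u v < eps.
Proof.
  intros HdX Hpc Hr Hinj eps Heps.
  destruct (uniform_of_sequential (fun uv : Y * Y => dX (p (fst uv)) (p (snd uv)))
    (fun uv => dY (fst uv) (snd uv) < r/2 -> dY (fst uv) (snd uv) < eps))
    as [rho [Hrho Hgood]].
  2: { exists rho; split; [exact Hrho |]; intros u v Huv Hpuv; exact (Hgood (u, v) Hpuv Huv). }
  intros w Hw.
  destruct (HYc (fun n => fst (w n))) as [phi [a [Hphi Hcva]]].
  destruct (HYc (fun n => snd (w (phi n)))) as [psi [b [Hpsi Hcvb]]].
  set (u := fun n => fst (w (phi (psi n)))); set (v := fun n => snd (w (phi (psi n)))).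
  assert (Hua : converges dY u a) by exact (converges_subseq dY (fun n => fst (w (phi n))) a psi Hpsi Hcva).
  assert (Hvb : converges dY v b) by exact Hcvb.
  assert (Hsmall : forall e, e > 0 -> eventually (fun n => dX (p (u n)) (p (v n)) < e)).
  { intros e He.
    generalize (eventually_subseq psi _ Hpsi
      (eventually_subseq phi _ Hphi (eventually_inv_succ_lt e He))).
    intros [N HN]; exists N; intros n Hn.
    specialize (HN n Hn); destruct (Hw (phi (psi n))) as [Hd _]; unfold u, v; lra. }
  assert (Hpab : p a = p b).
  { apply (limits_coincide _ dX HdX (fun n => p (u n)) (fun n => p (v n)));
      [apply (continuous_converges dY) .. | exact Hsmall]; assumption. }
  set (e := Rmin (r/4) (eps/2)).
  assert (He : e > 0) by (apply Rmin_pos; lra).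
  assert (He1 : e <= r/4) by apply Rmin_l.
  assert (He2 : e <= eps/2) by apply Rmin_r.
  destruct (eventually_witness _ (eventually_and _ _ (Hua e He) (Hvb e He)))
    as [n [Hun Hvn]].
  destruct (Hw (phi (psi n))) as [_ Hbad].
  apply imply_to_and in Hbad as [Hnear Hfar]; fold (u n) (v n) in Hnear, Hfar.
  rewrite (dist_sym _ dY HdY) in Hun.
  pose proof (dist_triangle _ dY HdY a (u n) b).
  pose proof (dist_triangle _ dY HdY (u n) (v n) b).
  assert (Hab : a = b) by (apply Hinj; [lra | exact Hpab]); subst b.
  pose proof (dist_triangle _ dY HdY (u n) a (v n)) as Hsplit.
  rewrite (dist_sym _ dY HdY a (v n)), (dist_sym _ dY HdY (u n) a) in Hsplit; lra.
Qed.

End FactorMap.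

Lemma uniform_on_compact (G Y : Type) (opG : (G -> Prop) -> Prop) (zero : G)
  (add : G -> G -> G) (dY : Y -> Y -> R) (actY : G -> Y -> Y)
  (HdY : is_metric dY) (HYc : m_compact dY)
  (HactY : is_cont_action opG zero add dY actY)
  (K : G -> Prop) (HK : t_compact_set opG K) :
  forall r, r > 0 -> exists delta, delta > 0 /\
    forall k a b, K k -> dY a b < delta -> dY (actY k a) (actY k b) < r.
Proof.
  destruct HactY as [_ [_ Hcont]]; intros r Hr.
  destruct (uniform_of_sequential (fun w : G * (Y * Y) => dY (fst (snd w)) (snd (snd w)))
    (fun w => K (fst w) -> dY (actY (fst w) (fst (snd w))) (actY (fst w) (snd (snd w))) < r))
    as [delta [Hdelta Hgood]].
  2: { exists delta; split; [exact Hdelta |].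
       intros k a b Hk Hab; exact (Hgood (k, (a, b)) Hab Hk). }
  intros w Hw.
  destruct (HYc (fun n => fst (snd (w n)))) as [phi [a [Hphi Hcv]]].
  destruct (compact_uniform_radius opG K (fun U delta => exists g, forall g' x',
      U g' -> dY a x' < delta -> dY (actY g a) (actY g' x') < r/2) HK)
    as [m [Hm Hunif]].
  { intros g _; destruct (Hcont g a (r/2) ltac:(lra)) as [U [delta [HU [HUg [Hd Hg]]]]].
    exists U, delta; repeat split; auto; exists g; exact Hg. }
  destruct (eventually_witness _ (eventually_and _ _ (Hcv (m/2) ltac:(lra))
    (eventually_subseq phi _ Hphi (eventually_inv_succ_lt (m/2) ltac:(lra)))))
    as [n [Hclose Hsmall]].
  destruct (Hw (phi n)) as [Hpair Hbad]; apply imply_to_and in Hbad as [Hk Hfar].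
  destruct (w (phi n)) as [k [x y]]; cbn [fst snd] in *.
  destruct (Hunif k Hk) as [U [delta [HUk [Hmd [g Hg]]]]].
  rewrite (dist_sym _ dY HdY) in Hclose.
  pose proof (dist_triangle _ dY HdY a x y).
  pose proof (Hg k x HUk ltac:(lra)); pose proof (Hg k y HUk ltac:(lra)).
  pose proof (dist_triangle _ dY HdY (actY k x) (actY g a) (actY k y)) as Hsplit.
  rewrite (dist_sym _ dY HdY (actY k x) (actY g a)) in Hsplit; lra.
Qed.

Lemma nsum_ind {G : Type} (zero : G) (add : G -> G -> G) (K Q : G -> Prop) :
  Q zero -> (forall k h, K k -> Q h -> Q (add k h)) ->
  forall n g, nsum zero add K n g -> Q g.
Proof.
  intros H0 HS n; induction n as [| n IH]; simpl; intros g Hg.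
  - subst g; exact H0.
  - destruct Hg as [k [h [Hk [Hh ->]]]]; apply HS; auto.
Qed.

Theorem mainTheorem4
  (G : Type) (opG : (G -> Prop) -> Prop) (zero : G) (add : G -> G -> G) (opp : G -> G)
  (HG : is_LCA_group opG zero add opp)
  (HGcg : compactly_generated opG zero add opp)
  (Y : Type) (dY : Y -> Y -> R) (HdY : is_metric dY) (HYc : m_compact dY)
  (actY : G -> Y -> Y) (HactY : is_cont_action opG zero add dY actY)
  (X : Type) (dX : X -> X -> R) (HdX : is_metric dX) (HXc : m_compact dX)
  (actX : G -> X -> X) (HactX : is_cont_action opG zero add dX actX)
  (p : Y -> X)
  (Hpc : m_continuous dY dX p)
  (Hps : forall x, exists y, p y = x)
  (Hpe : forall g y, p (actY g y) = actX g (p y))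
  (Hpf : finite_to_one p)
  (Hpl : local_homeo dY dX p)
  (HXconn : m_connected dX)
  (HXeq : equicontinuous dX actX) :
  equicontinuous dY actY.
Proof.
  destruct (local_injectivity_radius Y X dY dX p HdY HYc Hpl) as [r [Hr Hinj]].
  destruct HGcg as [K [HKc [_ HKgen]]].
  intros z eps Heps.
  destruct (uniform_on_compact G Y opG zero add dY actY HdY HYc HactY K HKc (r/2))
    as [d1 [Hd1 HKunif]]; [lra |].
  set (e := Rmin eps d1).
  assert (He : e > 0) by (apply Rmin_pos; lra).
  destruct (uniform_local_inverse Y X dY dX p HdY HYc r HdX Hpc Hr Hinj e He)
    as [rho [Hrho Hinv]].
  destruct (HXeq (p z) rho Hrho) as [dx [Hdx HXorbit]].
  destruct (Hpc z dx Hdx) as [dp [Hdp Hpz]].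
  exists (Rmin e dp); split; [apply Rmin_pos; lra |]; intros z' Hzz' t.
  destruct HactY as [Hact0 [Hact_add _]].
  assert (Horbit : forall n t, nsum zero add K n t -> dY (actY t z) (actY t z') < e).
  { apply nsum_ind.
    - rewrite !Hact0; eapply Rlt_le_trans; [exact Hzz' | apply Rmin_l].
    - intros k h Hk Hh; apply Hinv.
      + rewrite !Hact_add; apply HKunif; [exact Hk |].
        eapply Rlt_le_trans; [exact Hh | apply Rmin_r].
      + rewrite !Hpe; apply HXorbit, Hpz.
        eapply Rlt_le_trans; [exact Hzz' | apply Rmin_r]. }
  destruct (HKgen t) as [n Hn].
  eapply Rlt_le_trans; [exact (Horbit n t Hn) | apply Rmin_l].
Qed.
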